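(* The set of lower accumulation points for $2$ runners is exactly $\mathcal{S}(1)=\{1/2\}$, and there are no upper accumulation points for $2$ runners.
   Context: For a real number $x$, $\Vert x\Vert$ denotes the distance from $x$ to the nearest integer. For positive integers $v_1,\ldots,v_n$, $\mathrm{ML}(v_1,\ldots,v_n)=\max_{t\in\mathbb{R}}\min_{1\le i\le n}\Vert t v_i\Vert$. Let $\mathcal{S}(n)=\{\mathrm{ML}(v_1,\ldots,v_n): v_1,\ldots,v_n \text{ positive integers}\}$. A real number $A$ is a lower accumulation point for $n$ runners if $\mathcal{S}(n)$ contains a sequence of elements strictly less than $A$ converging to $A$; it is an upper accumulation point for $n$ runners if $\mathcal{S}(n)$ contains a sequence of elements strictly greater than $A$ converging to $A$. *)

From Stdlib Require Import Reals Lra Lia.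
Open Scope R_scope.

(* ||x|| : distance from x to the nearest integer *)
Definition dist_int (x : R) : R := Rmin (frac_part x) (1 - frac_part x).

Definition min_at (n : nat) (v : nat -> nat) (t m : R) : Prop :=
  (exists i, (i < n)%nat /\ dist_int (t * INR (v i)) = m) /\
  (forall i, (i < n)%nat -> m <= dist_int (t * INR (v i))).

Definition is_ML (n : nat) (v : nat -> nat) (m : R) : Prop :=
  (exists t, min_at n v t m) /\
  (forall t m', min_at n v t m' -> m' <= m).

Definition S_set (n : nat) (x : R) : Prop :=
  exists v : nat -> nat, (forall i, (i < n)%nat -> (0 < v i)%nat) /\ is_ML n v x.

Definition lower_acc (n : nat) (A : R) : Prop :=
  exists u : nat -> R, (forall k, S_set n (u k) /\ u k < A) /\ Un_cv u A.

Definition upper_acc (n : nat) (A : R) : Prop :=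
  exists u : nat -> R, (forall k, S_set n (u k) /\ A < u k) /\ Un_cv u A.

(** Write [s = a + b = 2k + 1] for coprime speeds [a], [b].  Choosing [p a + q b = 1], the
    time [t = (p - q) k / s] gives [t a = k/s] and [t b = -k/s] modulo 1, so both runners are
    at distance [k/s] from an integer.  No time does better: if [||t a||] and [||t b||] both
    exceeded [k/s], clearing denominators in [b (t a) = a (t b)] would trap an integer strictly
    between [-1] and [0].  Hence S(2) = {1/2} ∪ {k/(2k+1) : k >= 1}, a set whose points
    below [1/2] are isolated and which accumulates only at [1/2], from below. *)

From Stdlib Require Import Reals Lra Lia ZArith Znumtheory.
Open Scope R_scope.

Lemma dist_int_bounds x : 0 <= dist_int x <= 1/2.
Proof. destruct (base_fp x). unfold dist_int, Rmin; destruct Rle_dec; lra. Qed.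

Lemma dist_int_near_int x z : Rabs (x - IZR z) <= 1/2 -> dist_int x = Rabs (x - IZR z).
Proof.
  intros Hx. unfold dist_int.
  destruct (Rle_or_lt 0 (x - IZR z)) as [Hpos|Hneg].
  - rewrite Rabs_pos_eq in * by lra.
    destruct (Int_part_frac_part_spec x z (x - IZR z)) as [_ <-]; [lra | ring |].
    rewrite Rmin_left; lra.
  - rewrite Rabs_left in * by lra.
    destruct (Int_part_frac_part_spec x (z - 1) (x - IZR z + 1)) as [_ <-];
      [lra | rewrite minus_IZR; ring |].
    rewrite Rmin_right; lra.
Qed.

Lemma dist_int_add_small z y : 0 <= y <= 1/2 -> dist_int (IZR z + y) = y.
Proof.
  intros Hy. rewrite (dist_int_near_int _ z); replace (IZR z + y - IZR z) with y by ring;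
    rewrite Rabs_pos_eq; lra.
Qed.

Lemma dist_int_sub_small z y : 0 <= y <= 1/2 -> dist_int (IZR z - y) = y.
Proof.
  intros Hy. rewrite (dist_int_near_int _ z); replace (IZR z - y - IZR z) with (- y) by ring;
    rewrite Rabs_Ropp, Rabs_pos_eq; lra.
Qed.

Lemma dist_int_gt c x : c < dist_int x -> exists n : Z, IZR n + c < x < IZR n + 1 - c.
Proof.
  intros H. exists (Int_part x). pose proof (Rplus_Int_part_frac_part x).
  unfold dist_int, Rmin in H; destruct Rle_dec; lra.
Qed.

Lemma min_at_of_eq n v t m : (0 < n)%nat ->
  (forall i, (i < n)%nat -> dist_int (t * INR (v i)) = m) -> min_at n v t m.
Proof.
  intros Hn Hm. split; [exists 0%nat; auto | intros i Hi; rewrite Hm; auto; lra].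
Qed.

Lemma is_ML_intro n v t m : min_at n v t m ->
  (forall t', exists i, (i < n)%nat /\ dist_int (t' * INR (v i)) <= m) -> is_ML n v m.
Proof.
  intros Ht Hub. split; [exists t; exact Ht |].
  intros t' m' [_ Hle]. destruct (Hub t') as [i [Hi Hd]]. specialize (Hle i Hi). lra.
Qed.

Lemma is_ML_unique n v x y : is_ML n v x -> is_ML n v y -> x = y.
Proof.
  intros [[t1 H1] U1] [[t2 H2] U2].
  apply Rle_antisym; [apply (U2 t1) | apply (U1 t2)]; assumption.
Qed.

Lemma is_ML_one v : (0 < v 0%nat)%nat -> is_ML 1 v (1/2).
Proof.
  intros Hv. apply lt_0_INR in Hv.
  apply (is_ML_intro _ _ (/ (2 * INR (v 0%nat)))).
  - apply min_at_of_eq; [lia |]. intros i Hi. replace i with 0%nat by lia.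
    replace (/ (2 * INR (v 0%nat)) * INR (v 0%nat)) with (IZR 0 + 1/2) by (simpl; field; lra).
    apply dist_int_add_small; lra.
  - intros t. exists 0%nat. split; [lia | apply dist_int_bounds].
Qed.

Lemma S_set_1_iff x : S_set 1 x <-> x = 1/2.
Proof.
  split.
  - intros [v [Hpos HML]]. apply (is_ML_unique 1 v); [exact HML |].
    apply is_ML_one, Hpos; lia.
  - intros ->. exists (fun _ => 1%nat). split; [intros; lia |]. apply is_ML_one; lia.
Qed.

Lemma dist_int_two_le (a b k : Z) x :
  (0 < a)%Z -> (0 < b)%Z -> (a + b = 2 * k + 1)%Z ->
  dist_int (x * IZR a) <= IZR k / IZR (a + b) \/
  dist_int (x * IZR b) <= IZR k / IZR (a + b).
Proof.
  intros Ha Hb Hab.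
  destruct (Rle_or_lt (dist_int (x * IZR a)) (IZR k / IZR (a + b))) as [| Hxa];
    [now left | right].
  destruct (Rle_or_lt (dist_int (x * IZR b)) (IZR k / IZR (a + b))) as [| Hxb];
    [assumption | exfalso].
  destruct (dist_int_gt _ _ Hxa) as [n1 Hn1]. destruct (dist_int_gt _ _ Hxb) as [n2 Hn2].
  assert (Ha' : 0 < IZR a) by (apply IZR_lt; lia).
  assert (Hb' : 0 < IZR b) by (apply IZR_lt; lia).
  assert (Hs : IZR a + IZR b = 2 * IZR k + 1)
    by (rewrite <- plus_IZR, Hab, plus_IZR, mult_IZR; reflexivity).
  assert (Hsk : (IZR a + IZR b) * (IZR k / (IZR a + IZR b)) = IZR k)
    by (field; apply Rgt_not_eq; lra).
  rewrite plus_IZR in Hn1, Hn2.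
  set (s := IZR a + IZR b) in *. set (c := IZR k / s) in *.
  assert (A1 : s * IZR n1 + IZR k < s * x * IZR a < s * IZR n1 + IZR k + 1) by (split; nra).
  assert (A2 : s * IZR n2 + IZR k < s * x * IZR b < s * IZR n2 + IZR k + 1) by (split; nra).
  assert (B1 : IZR b * (s * IZR n1 + IZR k) < IZR a * (s * IZR n2 + IZR k + 1)) by nra.
  assert (B2 : IZR a * (s * IZR n2 + IZR k) < IZR b * (s * IZR n1 + IZR k + 1)) by nra.
  (* [s z = b (s n1 + k) - a (s n2 + k + 1)] lies in [(-s, 0)], so [-1 < z < 0]. *)
  set (z := (b * n1 - a * n2 + k - a)%Z).
  assert (Hz : s * IZR z = IZR b * (s * IZR n1 + IZR k) - IZR a * (s * IZR n2 + IZR k + 1)).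
  { unfold z, s in *. rewrite !minus_IZR, plus_IZR, minus_IZR, !mult_IZR. nra. }
  assert (Hs0 : 0 < s) by (unfold s; lra).
  assert (Hneg : IZR z < 0) by nra. assert (Hgt : -1 < IZR z) by (unfold s in *; nra).
  apply lt_IZR in Hneg. apply lt_IZR in Hgt. lia.
Qed.

Lemma floor_half_ratio_bounds (s k : Z) : (s = 2 * k \/ s = 2 * k + 1)%Z -> (0 < s)%Z ->
  0 <= IZR k / IZR s <= 1/2.
Proof.
  intros Hk Hs.
  assert (0 <= IZR k) by (apply IZR_le; lia).
  assert (2 * IZR k <= IZR s) by (rewrite <- mult_IZR; apply IZR_le; lia).
  apply IZR_lt in Hs.
  split; apply (Rmult_le_reg_r (IZR s)); try lra; field_simplify; lra.
Qed.

Lemma dist_int_balanced (a b p q k : Z) : (p * a + q * b = 1)%Z -> (0 < a + b)%Z ->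
  (a + b = 2 * k \/ a + b = 2 * k + 1)%Z ->
  let x := IZR ((p - q) * k) / IZR (a + b) in
  dist_int (x * IZR a) = IZR k / IZR (a + b) /\ dist_int (x * IZR b) = IZR k / IZR (a + b).
Proof.
  intros Hpq Hs Hk x.
  pose proof (floor_half_ratio_bounds _ _ Hk Hs) as Hc.
  apply IZR_lt, Rgt_not_eq in Hs.
  assert (Hx : forall c, x * IZR c = IZR ((p - q) * k * c) / IZR (a + b))
    by (intros c; unfold x; rewrite !mult_IZR; field; exact Hs).
  assert (Ea : ((p - q) * k * a = - (q * k) * (a + b) + k)%Z)
    by (transitivity (k * (p * a + q * b) - q * k * (a + b))%Z; [ring | rewrite Hpq; ring]).
  assert (Eb : ((p - q) * k * b = p * k * (a + b) - k)%Z)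
    by (transitivity (p * k * (a + b) - k * (p * a + q * b))%Z; [ring | rewrite Hpq; ring]).
  rewrite !Hx, Ea, Eb, plus_IZR, minus_IZR, !mult_IZR.
  split.
  - replace ((IZR (- (q * k)) * IZR (a + b) + IZR k) / IZR (a + b))
      with (IZR (- (q * k)) + IZR k / IZR (a + b)) by (field; exact Hs).
    now apply dist_int_add_small.
  - replace ((IZR p * IZR k * IZR (a + b) - IZR k) / IZR (a + b))
      with (IZR (p * k) - IZR k / IZR (a + b)) by (rewrite mult_IZR; field; exact Hs).
    now apply dist_int_sub_small.
Qed.

Lemma is_ML_two v (a b d p q k : Z) :
  (0 < a)%Z -> (0 < b)%Z -> (0 < d)%Z -> (p * a + q * b = 1)%Z ->
  INR (v 0%nat) = IZR (a * d) -> INR (v 1%nat) = IZR (b * d) ->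
  (a + b = 2 * k \/ a + b = 2 * k + 1)%Z ->
  is_ML 2 v (IZR k / IZR (a + b)).
Proof.
  intros Ha Hb Hd Hpq Hv0 Hv1 Hk.
  assert (Hd' : IZR d <> 0) by (apply Rgt_not_eq, IZR_lt; lia).
  assert (Hs' : IZR (a + b) <> 0) by (apply Rgt_not_eq, IZR_lt; lia).
  assert (Hscale : forall t c, t * IZR (c * d) = t * IZR d * IZR c)
    by (intros; rewrite mult_IZR; ring).
  destruct (dist_int_balanced a b p q k Hpq ltac:(lia) Hk) as [H0 H1].
  apply (is_ML_intro _ _ (IZR ((p - q) * k) / IZR (a + b) / IZR d)).
  - apply min_at_of_eq; [lia |].
    intros [| [| i]] Hi; [rewrite Hv0 | rewrite Hv1 | lia];
      rewrite Hscale; replace (_ / IZR d * IZR d) with (IZR ((p - q) * k) / IZR (a + b))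
      by (field; auto); assumption.
  - intros t. destruct Hk as [Heven | Hodd].
    + exists 0%nat. split; [lia |].
      replace (IZR k / IZR (a + b)) with (1/2).
      * apply dist_int_bounds.
      * rewrite Heven, mult_IZR. field. apply Rgt_not_eq, IZR_lt. lia.
    + destruct (dist_int_two_le a b k (t * IZR d) Ha Hb Hodd) as [H | H];
        [exists 0%nat; rewrite Hv0 | exists 1%nat; rewrite Hv1];
        (split; [lia | rewrite Hscale; exact H]).
Qed.

Lemma Z_coprime_factorization (A B : Z) : (0 < A)%Z -> (0 < B)%Z ->
  exists a b d p q, (0 < a)%Z /\ (0 < b)%Z /\ (0 < d)%Z /\
    A = (a * d)%Z /\ B = (b * d)%Z /\ (p * a + q * b = 1)%Z.
Proof.
  intros HA HB.
  destruct (Zis_gcd_bezout _ _ _ (Zgcd_is_gcd A B)) as [p q Hpq].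
  destruct (Z.gcd_divide_l A B) as [a Ha]. destruct (Z.gcd_divide_r A B) as [b Hb].
  assert (Hd : (0 < Z.gcd A B)%Z).
  { pose proof (Z.gcd_nonneg A B). destruct (Z.eq_dec (Z.gcd A B) 0); [nia | lia]. }
  exists a, b, (Z.gcd A B), p, q. repeat split; try nia.
Qed.

Definition ML2_odd (k : nat) : R := INR k / (2 * INR k + 1).

Lemma S_set_2_cases x : S_set 2 x -> x = 1/2 \/ exists k, x = ML2_odd k.
Proof.
  intros [v [Hpos HML]].
  destruct (Z_coprime_factorization (Z.of_nat (v 0%nat)) (Z.of_nat (v 1%nat)))
    as (a & b & d & p & q & Ha & Hb & Hd & Hv0 & Hv1 & Hpq);
    [specialize (Hpos 0%nat); lia | specialize (Hpos 1%nat); lia |].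
  assert (Hk : exists k, (a + b = 2 * k \/ a + b = 2 * k + 1)%Z)
    by (destruct (Z_modulo_2 (a + b)) as [[k Hk] | [k Hk]]; exists k; auto).
  destruct Hk as [k Hk].
  rewrite (is_ML_unique _ _ _ _ HML (is_ML_two v a b d p q k Ha Hb Hd Hpq
    ltac:(now rewrite INR_IZR_INZ, Hv0) ltac:(now rewrite INR_IZR_INZ, Hv1) Hk)).
  destruct Hk as [Hk | Hk]; rewrite Hk, ?plus_IZR, mult_IZR.
  - left. field. apply Rgt_not_eq, IZR_lt. lia.
  - right. exists (Z.to_nat k). unfold ML2_odd.
    rewrite INR_IZR_INZ, Z2Nat.id by lia. reflexivity.
Qed.

Lemma S_set_2_ML2_odd k : (1 <= k)%nat -> S_set 2 (ML2_odd k).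
Proof.
  intros Hk.
  exists (fun i => match i with 0%nat => 1%nat | _ => (2 * k)%nat end). split.
  - intros [| i] _; lia.
  - replace (ML2_odd k) with (IZR (Z.of_nat k) / IZR (1 + Z.of_nat (2 * k))).
    + apply (is_ML_two _ 1 (Z.of_nat (2 * k)) 1 1 0); try lia; rewrite INR_IZR_INZ; f_equal; lia.
    + unfold ML2_odd. rewrite plus_IZR, <- !INR_IZR_INZ, mult_INR. simpl. f_equal. ring.
Qed.

Lemma ML2_odd_bounds k : 0 <= ML2_odd k < 1/2.
Proof.
  unfold ML2_odd. pose proof (pos_INR k).
  split; [apply (Rmult_le_reg_r (2 * INR k + 1)) | apply (Rmult_lt_reg_r (2 * INR k + 1))];
    try lra; field_simplify; lra.
Qed.

Lemma S_set_2_le_half x : S_set 2 x -> x <= 1/2.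
Proof.
  intros H. destruct (S_set_2_cases x H) as [-> | [k ->]]; [lra |].
  left; apply ML2_odd_bounds.
Qed.

Lemma ML2_odd_le_index B k : B < 1/2 -> ML2_odd k <= B -> INR k <= B / (1 - 2 * B).
Proof.
  unfold ML2_odd. intros HB Hk. pose proof (pos_INR k).
  apply (Rmult_le_reg_r (1 - 2 * B)); [lra |].
  apply (Rmult_le_compat_r (2 * INR k + 1)) in Hk; [| lra].
  field_simplify in Hk; [| lra]. field_simplify; lra.
Qed.

Lemma ML2_odd_sub j k :
  ML2_odd j - ML2_odd k = (INR j - INR k) / ((2 * INR j + 1) * (2 * INR k + 1)).
Proof. unfold ML2_odd. pose proof (pos_INR j). pose proof (pos_INR k). field; lra. Qed.

Lemma ML2_odd_separated j k J : j <> k -> INR j <= J -> INR k <= J ->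
  / ((2 * J + 1) * (2 * J + 1)) <= Rabs (ML2_odd j - ML2_odd k).
Proof.
  intros Hjk Hj Hk. pose proof (pos_INR j). pose proof (pos_INR k).
  assert (Hgap : 1 <= Rabs (INR j - INR k)).
  { destruct (Nat.lt_total j k) as [Hlt | [Heq | Hlt]]; [| contradiction |];
      apply le_INR in Hlt; rewrite S_INR in Hlt;
      [rewrite Rabs_left1 | rewrite Rabs_pos_eq]; lra. }
  assert (Hden : 0 < (2 * INR j + 1) * (2 * INR k + 1)) by nra.
  rewrite ML2_odd_sub. unfold Rdiv. rewrite Rabs_mult, Rabs_inv, (Rabs_pos_eq (_ * _)) by lra.
  apply Rle_trans with (/ ((2 * INR j + 1) * (2 * INR k + 1))).
  - apply Rinv_le_contravar; [exact Hden | nra].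
  - rewrite <- (Rmult_1_l (/ _)) at 1.
    apply Rmult_le_compat_r; [left; apply Rinv_0_lt_compat |]; lra.
Qed.

Lemma Un_cv_separated_attained u A N0 eps : Un_cv u A -> 0 < eps ->
  (forall m n, (N0 <= m)%nat -> (N0 <= n)%nat -> u m = u n \/ eps <= Rabs (u m - u n)) ->
  exists N, u N = A.
Proof.
  intros Hcv Heps Hsep.
  destruct (Hcv (eps / 2) ltac:(lra)) as [N1 HN1].
  set (N := Nat.max N0 N1).
  assert (Hconst : forall n, (N <= n)%nat -> u n = u N).
  { intros n Hn.
    destruct (Hsep n N ltac:(lia) ltac:(lia)) as [| Hfar]; [assumption | exfalso].
    pose proof (Rdist_tri (u n) (u N) A) as Htri. rewrite (Rdist_sym A) in Htri.
    specialize (HN1 n ltac:(lia)) as Hn'. specialize (HN1 N ltac:(lia)) as HN'.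
    unfold Rdist at 1 in Htri. lra. }
  exists N. destruct (Req_dec (u N) A) as [| Hne]; [assumption | exfalso].
  destruct (Hcv _ (Rabs_pos_lt _ (Rminus_eq_contra _ _ Hne))) as [N2 HN2].
  specialize (HN2 (Nat.max N N2) ltac:(lia)). unfold Rdist in HN2.
  rewrite (Hconst (Nat.max N N2) ltac:(lia)) in HN2. lra.
Qed.

Lemma S_set_2_limit_attained u A : Un_cv u A -> A < 1/2 -> (forall n, S_set 2 (u n)) ->
  exists N, u N = A.
Proof.
  intros Hcv HA HS.
  set (B := (A + 1/2) / 2). set (J := B / (1 - 2 * B)).
  destruct (Hcv (B - A) ltac:(unfold B; lra)) as [N0 HN0].
  assert (Hidx : forall n, (N0 <= n)%nat -> exists k, u n = ML2_odd k /\ INR k <= J).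
  { intros n Hn. specialize (HN0 n Hn). unfold Rdist in HN0. apply Rabs_def2 in HN0.
    destruct (S_set_2_cases _ (HS n)) as [Hhalf | [k Hk]].
    - exfalso. unfold B in *. lra.
    - exists k. split; [exact Hk |]. apply ML2_odd_le_index; [unfold B; lra |].
      rewrite <- Hk. lra. }
  assert (HJ : 0 <= J).
  { destruct (Hidx N0 (le_n _)) as [k [_ Hk]]. pose proof (pos_INR k). lra. }
  apply (Un_cv_separated_attained u A N0 (/ ((2 * J + 1) * (2 * J + 1)))); [exact Hcv | |].
  - apply Rinv_0_lt_compat. nra.
  - intros m n Hm Hn.
    destruct (Hidx m Hm) as [j [-> Hj]]. destruct (Hidx n Hn) as [k [-> Hk]].
    destruct (Nat.eq_dec j k) as [-> | Hjk]; [now left | right].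
    now apply ML2_odd_separated.
Qed.

Lemma ML2_odd_cv_half : Un_cv (fun n => ML2_odd (S n)) (1/2).
Proof.
  intros eps Heps. destruct (archimed_cor1 eps Heps) as [N [HN HN0]].
  exists N. intros n Hn. unfold Rdist, ML2_odd.
  assert (HNn : INR N <= INR (S n)) by (apply le_INR; lia).
  assert (0 < INR N) by (apply lt_0_INR; lia).
  replace (INR (S n) / (2 * INR (S n) + 1) - 1/2) with (- / (2 * (2 * INR (S n) + 1)))
    by (field; lra).
  rewrite Rabs_Ropp, Rabs_pos_eq by (left; apply Rinv_0_lt_compat; lra).
  apply Rle_lt_trans with (/ INR N); [apply Rinv_le_contravar; lra | exact HN].
Qed.

Lemma lower_acc_2_iff A : lower_acc 2 A <-> A = 1/2.
Proof.
  split.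
  - intros [u [Hu Hcv]].
    destruct (Rtotal_order A (1/2)) as [Hlt | [Heq | Hgt]]; [exfalso | exact Heq | exfalso].
    + destruct (S_set_2_limit_attained u A Hcv Hlt (fun n => proj1 (Hu n))) as [N HN].
      destruct (Hu N). lra.
    + destruct (Hcv (A - 1/2) ltac:(lra)) as [N HN].
      specialize (HN N (le_n _)). pose proof (S_set_2_le_half _ (proj1 (Hu N))).
      unfold Rdist in HN. apply Rabs_def2 in HN. lra.
  - intros ->. exists (fun n => ML2_odd (S n)). split; [| exact ML2_odd_cv_half].
    intros k. split; [apply S_set_2_ML2_odd; lia | apply ML2_odd_bounds].
Qed.

Lemma not_upper_acc_2 A : ~ upper_acc 2 A.
Proof.
  intros [u [Hu Hcv]].
  destruct (Rlt_le_dec A (1/2)) as [Hlt | Hge].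
  - destruct (S_set_2_limit_attained u A Hcv Hlt (fun n => proj1 (Hu n))) as [N HN].
    destruct (Hu N). lra.
  - destruct (Hu 0%nat) as [Hs Hgt]. pose proof (S_set_2_le_half _ Hs). lra.
Qed.

Theorem theorem9p3 :
  (forall x : R, S_set 1 x <-> x = 1 / 2) /\
  (forall A : R, lower_acc 2 A <-> S_set 1 A) /\
  (forall A : R, ~ upper_acc 2 A).
Proof.
  split; [exact S_set_1_iff |]. split.
  - intros A. rewrite S_set_1_iff. apply lower_acc_2_iff.
  - exact not_upper_acc_2.
Qed.
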